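(* Let $(G_n)_{n\in\mathbb N}$ be an increasing sequence of subgroups of $\mathrm{Diff}^1_+([0,1])$ (i.e. $G_n\subset G_{n+1}$ for all $n$). Assume that every $G_n$ is finitely generated and $C^1$-close to the identity. Then $G=\bigcup_{n\in\mathbb N}G_n$ is $C^1$-close to the identity.
   Context: A group $G\subset \mathrm{Diff}^1_+([0,1])$ is $C^1$-close to the identity if there is a sequence $h_n\in \mathrm{Diff}^1_+([0,1])$ such that $h_n g h_n^{-1}\to \mathrm{id}$ in the $C^1$-topology as $n\to\infty$, for every $g\in G$. *)

From Stdlib Require Import Reals List.
Open Scope R_scope.

Definition I01 (x : R) : Prop := 0 <= x <= 1.

(* df0 is the derivative of f at x relative to [0,1]
   (one-sided at the endpoints). *)
Definition is_deriv01 (f : R -> R) (x df0 : R) : Prop :=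
  limit1_in (fun y => (f y - f x) / (y - x)) (fun y => I01 y /\ y <> x) df0 x.

Definition C1_deriv01 (f df : R -> R) : Prop :=
  (forall x, I01 x -> is_deriv01 f x (df x)) /\
  (forall x, I01 x -> limit1_in df I01 (df x) x).

Definition C1_01 (f : R -> R) : Prop := exists df, C1_deriv01 f df.

(* Diff^1_+([0,1]): f maps [0,1] to [0,1], is C^1, increasing, and has an
   inverse on [0,1] which is also C^1. Elements are identified when they
   agree on [0,1]. *)
Definition Diff1p (f : R -> R) : Prop :=
  (forall x, I01 x -> I01 (f x)) /\ C1_01 f /\
  (forall x y, I01 x -> I01 y -> x < y -> f x < f y) /\
  exists g, (forall x, I01 x -> I01 (g x)) /\ C1_01 g /\
            (forall x, I01 x -> g (f x) = x /\ f (g x) = x).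

Definition is_subgroup (G : (R -> R) -> Prop) : Prop :=
  (forall f, G f -> Diff1p f) /\
  G (fun x => x) /\
  (forall f g, G f -> G g -> G (fun x => f (g x))) /\
  (forall f, G f -> exists g, G g /\
      forall x, I01 x -> g (f x) = x /\ f (g x) = x).

Inductive gen (S : list (R -> R)) : (R -> R) -> Prop :=
| gen_base : forall f, In f S -> gen S f
| gen_id : gen S (fun x => x)
| gen_comp : forall f g, gen S f -> gen S g -> gen S (fun x => f (g x))
| gen_inv : forall f g, gen S f -> (forall x, I01 x -> I01 (g x)) ->
    (forall x, I01 x -> g (f x) = x /\ f (g x) = x) -> gen S g
| gen_ext : forall f g, gen S f -> (forall x, I01 x -> f x = g x) -> gen S g.

Definition fin_gen (G : (R -> R) -> Prop) : Prop :=
  exists S : list (R -> R), (forall s, In s S -> G s) /\ (forall g, G g -> gen S g).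

Definition C1_conv_id (u : nat -> R -> R) : Prop :=
  exists du : nat -> R -> R,
    (forall n, C1_deriv01 (u n) (du n)) /\
    forall eps, eps > 0 -> exists N, forall n, (n >= N)%nat ->
      forall x, I01 x -> Rabs (u n x - x) < eps /\ Rabs (du n x - 1) < eps.

Definition C1_close_id (G : (R -> R) -> Prop) : Prop :=
  exists h hinv : nat -> R -> R,
    (forall n, Diff1p (h n)) /\
    (forall n x, I01 x -> I01 (hinv n x) /\ hinv n (h n x) = x /\ h n (hinv n x) = x) /\
    forall g, G g -> C1_conv_id (fun n x => h n (g (hinv n x))).

From Stdlib Require Import Reals List Lra Lia ClassicalEpsilon.
Open Scope R_scope.

(* Idea (a diagonal argument).  For a homeomorphism u of [0,1] write
   [Near u e] when u is e-close to the identity in C^1.  Quantitatively,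
   e-closeness is preserved (up to a constant factor) by composition and by
   inversion, so if the conjugates h_k s h_k^-1 of every generator s of a
   group tend to the identity, so do the conjugates of every element of the
   group.  Given conjugating sequences (h^n_k)_k for each G_n, choose for
   each n an index k_n such that h^n_{k_n} conjugates every generator of
   G_0, ..., G_n into a 1/(n+1)-neighbourhood of the identity; the sequence
   H_n := h^n_{k_n} then works for every generator of every G_m, hence for
   every element of G = U G_m. *)

Lemma deriv_cont f x d : is_deriv01 f x d -> limit1_in f I01 (f x) x.
Proof.
  intros H.
  assert (H1 : limit1_in (fun y => (f y - f x) / (y - x) * (y - x))
                 (fun y => I01 y /\ y <> x) (d * 0) x).
  { apply limit_mul; [exact H|]. replace 0 with (x - x) by ring.
    apply limit_minus; [apply lim_x | apply (limit_free (fun _ => x) _ x)]. }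
  rewrite Rmult_0_r in H1.
  intros eps He. destruct (H1 eps He) as [a [Ha Hb]]. exists a; split; auto.
  intros y [Hy1 Hy2]. simpl in *. unfold Rdist in *.
  destruct (Req_dec y x) as [->|Hne].
  - replace (f x - f x) with 0 by ring. rewrite Rabs_R0; auto.
  - specialize (Hb y (conj (conj Hy1 Hne) Hy2)). simpl in Hb. unfold Rdist in Hb.
    replace (f y - f x) with ((f y - f x) / (y - x) * (y - x) - 0); [exact Hb|].
    field. lra.
Qed.

Lemma adh01 x : I01 x -> adhDa (fun y => I01 y /\ y <> x) x.
Proof.
  intros Hx alp Ha. unfold I01 in *. set (m := Rmin alp 1).
  assert (0 < m) by (unfold m; apply Rmin_pos; lra).
  assert (m <= alp) by apply Rmin_l. assert (m <= 1) by apply Rmin_r.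
  unfold Rdist. destruct (Rle_dec x (1/2)).
  - exists (x + m/2). split; [split; [lra|intro; lra]|].
    replace (x + m/2 - x) with (m/2) by ring. rewrite Rabs_right; lra.
  - exists (x - m/2). split; [split; [lra|intro; lra]|].
    replace (x - m/2 - x) with (-(m/2)) by ring. rewrite Rabs_Ropp, Rabs_right; lra.
Qed.

Lemma deriv_uniq f x a b : I01 x -> is_deriv01 f x a -> is_deriv01 f x b -> a = b.
Proof. intros Hx. apply single_limit, adh01, Hx. Qed.

Lemma deriv_ext f g x d :
  is_deriv01 f x d -> I01 x -> (forall y, I01 y -> f y = g y) -> is_deriv01 g x d.
Proof.
  intros H Hx E. unfold is_deriv01. eapply limit1_ext; [|exact H].
  intros y [Hy _]. rewrite !E; auto.
Qed.

Lemma chain f g x a b : I01 x -> (forall y, I01 y -> I01 (f y)) ->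
  is_deriv01 f x a -> is_deriv01 g (f x) b -> is_deriv01 (fun y => g (f y)) x (b * a).
Proof.
  intros Hx Hf Ha Hb.
  set (phi := fun z => if Req_EM_T z (f x) then b else (g z - g (f x)) / (z - f x)).
  assert (Hphi : limit1_in phi I01 b (f x)).
  { intros eps He. destruct (Hb eps He) as [al [Hal Hal2]]. exists al; split; auto.
    intros z [Hz Hd]. unfold phi. destruct (Req_EM_T z (f x)) as [E|E].
    - simpl; unfold Rdist. replace (b - b) with 0 by ring. rewrite Rabs_R0; auto.
    - apply Hal2; auto. }
  assert (Hc : limit1_in f (fun y => I01 y /\ y <> x) (f x) x).
  { eapply limit1_imp; [|apply (deriv_cont _ _ _ Ha)]. intros y [Hy _]; exact Hy. }
  assert (Hphif : limit1_in (fun y => phi (f y)) (fun y => I01 y /\ y <> x) b x).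
  { eapply limit1_imp; [|exact (limit_comp _ _ _ _ _ _ _ Hc Hphi)].
    intros y [Hy Hn]. split; [split; auto | apply Hf; auto]. }
  unfold is_deriv01. eapply limit1_ext; [|exact (limit_mul _ _ _ _ _ _ Hphif Ha)].
  intros y [Hy Hn]. unfold phi.
  destruct (Req_EM_T (f y) (f x)) as [E|E].
  - rewrite E. replace (f x - f x) with 0 by ring. unfold Rdiv. ring.
  - field. split; intro; [apply Hn|apply E]; lra.
Qed.

Lemma C1_comp f g df dg : (forall y, I01 y -> I01 (f y)) ->
  C1_deriv01 f df -> C1_deriv01 g dg ->
  C1_deriv01 (fun y => g (f y)) (fun y => dg (f y) * df y).
Proof.
  intros Hf [Hf1 Hf2] [Hg1 Hg2]. split.
  - intros x Hx. apply chain; auto.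
  - intros x Hx. apply limit_mul; auto.
    eapply limit1_imp;
      [|exact (limit_comp _ _ _ _ _ _ _ (deriv_cont _ _ _ (Hf1 x Hx)) (Hg2 (f x) (Hf x Hx)))].
    intros y Hy. split; auto.
Qed.

Lemma C1_id : C1_deriv01 (fun y => y) (fun _ => 1).
Proof.
  split; intros x Hx.
  - eapply limit1_ext; [|apply (limit_free (fun _ => 1) _ 0)].
    intros y [_ Hn]. field. lra.
  - apply (limit_free (fun _ => 1) _ 0).
Qed.

Lemma C1_ext f g df : C1_deriv01 f df -> (forall y, I01 y -> f y = g y) -> C1_deriv01 g df.
Proof. intros [H1 H2] E. split; auto. intros x Hx. eapply deriv_ext; eauto. Qed.

Definition maps01 (f : R -> R) : Prop := forall x, I01 x -> I01 (f x).

Definition Near (u : R -> R) (e : R) : Prop :=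
  forall du, C1_deriv01 u du -> forall x, I01 x ->
    Rabs (u x - x) < e /\ Rabs (du x - 1) < e.

Lemma near_mono u e1 e2 : e1 <= e2 -> Near u e1 -> Near u e2.
Proof. intros He H du C x Hx. destruct (H du C x Hx). split; lra. Qed.

Lemma near_ext u w e : Near u e -> (forall y, I01 y -> u y = w y) -> Near w e.
Proof.
  intros H E du Cd x Hx. rewrite <- E by auto. apply H; auto.
  eapply C1_ext; [exact Cd|]. intros; symmetry; auto.
Qed.

Lemma near_id w e : e > 0 -> (forall y, I01 y -> w y = y) -> Near w e.
Proof.
  intros He E du Cd x Hx. rewrite E by auto.
  assert (Hd : du x = 1).
  { eapply deriv_uniq; [exact Hx | apply Cd; auto |].
    eapply deriv_ext; [apply C1_id; auto | auto | intros; symmetry; auto]. }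
  rewrite Hd. replace (x - x) with 0 by ring. replace (1 - 1) with 0 by ring.
  rewrite Rabs_R0. lra.
Qed.

(* Composing two e-close maps gives a 3e-close map (for e <= 1):
   |(u o v)' - 1| <= |u' - 1| |v'| + |v' - 1| <= e (1 + e) + e. *)
Lemma near_comp u v w e : maps01 u -> maps01 v -> C1_01 u -> C1_01 v ->
  Near u e -> Near v e -> e <= 1 -> (forall y, I01 y -> w y = u (v y)) -> Near w (3 * e).
Proof.
  intros Mu Mv [du Cu] [dv Cv] Nu Nv He E dw Cw x Hx.
  assert (D : dw x = du (v x) * dv x).
  { eapply deriv_uniq; [exact Hx | apply Cw; auto |].
    eapply deriv_ext; [apply (C1_comp _ _ _ _ Mv Cv Cu); auto | auto |].
    intros; symmetry; auto. }
  rewrite D, E by auto.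
  destruct (Nu du Cu (v x) (Mv x Hx)) as [A1 A2].
  destruct (Nv dv Cv x Hx) as [B1 B2].
  assert (He0 : 0 <= e) by (pose proof (Rabs_pos (v x - x)); lra).
  split.
  - replace (u (v x) - x) with ((u (v x) - v x) + (v x - x)) by ring.
    pose proof (Rabs_triang (u (v x) - v x) (v x - x)). lra.
  - replace (du (v x) * dv x - 1) with ((du (v x) - 1) * dv x + (dv x - 1)) by ring.
    eapply Rle_lt_trans; [apply Rabs_triang|]. rewrite Rabs_mult.
    assert (Hdv : Rabs (dv x) <= 1 + e).
    { replace (dv x) with ((dv x - 1) + 1) by ring.
      pose proof (Rabs_triang (dv x - 1) 1). rewrite Rabs_R1 in *. lra. }
    assert (Rabs (du (v x) - 1) * Rabs (dv x) <= e * (1 + e)).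
    { apply Rmult_le_compat; try apply Rabs_pos; lra. }
    nra.
Qed.

(* The inverse of an e-close map is 2e-close (for e <= 1/2): at y = u z,
   w' y = 1 / u' z, so |w' y - 1| = |1 - u' z| |w' y| <= e * 2. *)
Lemma near_inv u w e : maps01 u -> maps01 w -> C1_01 u -> C1_01 w ->
  (forall x, I01 x -> w (u x) = x /\ u (w x) = x) ->
  Near u e -> e <= 1/2 -> Near w (2 * e).
Proof.
  intros Mu Mw [du Cu] _ Iv Nu He dw Cw y Hy.
  set (z := w y).
  assert (Hz : I01 z) by (apply Mw; auto).
  assert (uz : u z = y) by (apply Iv; auto).
  assert (D : du z * dw y = 1).
  { eapply deriv_uniq; [exact Hy | apply (C1_comp _ _ _ _ Mw Cw Cu); auto |].
    eapply deriv_ext; [apply C1_id; auto | auto |].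
    intros t Ht. symmetry. apply Iv; auto. }
  destruct (Nu du Cu z Hz) as [A1 A2].
  rewrite uz in A1.
  rewrite <- Rabs_Ropp in A1, A2.
  replace (-(y - z)) with (z - y) in A1 by ring.
  replace (-(du z - 1)) with (1 - du z) in A2 by ring.
  split; [pose proof (Rabs_pos (z - y)); lra|].
  assert (Ha : /2 <= Rabs (du z)).
  { replace (du z) with (1 - (1 - du z)) by ring.
    pose proof (Rabs_triang_inv 1 (1 - du z)). rewrite Rabs_R1 in *. lra. }
  assert (Hdw : Rabs (dw y) * Rabs (du z) = 1).
  { rewrite <- Rabs_mult, Rmult_comm, D. apply Rabs_R1. }
  replace (dw y - 1) with ((1 - du z) * dw y) by nra.
  rewrite Rabs_mult.
  assert (Rabs (dw y) <= 2) by nra.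
  pose proof (Rabs_pos (dw y)). pose proof (Rabs_pos (1 - du z)).
  nra.
Qed.

Definition cj (h hi g : R -> R) : R -> R := fun x => h (g (hi x)).

Definition invp (h hi : R -> R) : Prop :=
  forall x, I01 x -> I01 (hi x) /\ hi (h x) = x /\ h (hi x) = x.

Definition diff_like (g : R -> R) : Prop :=
  exists g', Diff1p g' /\ forall y, I01 y -> g y = g' y.

Lemma diff_like_maps01 g : diff_like g -> maps01 g.
Proof. intros [g' [[Hm _] E]] x Hx. rewrite E; auto. Qed.

Lemma inv_C1 h hi : Diff1p h -> invp h hi -> C1_01 hi.
Proof.
  intros [_ [_ [_ [g0 [Hg0m [[dg Hg0c] Hg0i]]]]]] Hi.
  exists dg. eapply C1_ext; [exact Hg0c|]. intros y Hy.
  destruct (Hg0i y Hy) as [_ E]. destruct (Hi (g0 y) (Hg0m y Hy)) as [_ [E2 _]].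
  rewrite <- E at 2. rewrite E2. reflexivity.
Qed.

Lemma conj_C1 h hi g : Diff1p h -> invp h hi -> diff_like g ->
  C1_01 (cj h hi g) /\ maps01 (cj h hi g).
Proof.
  intros Dh Hi [g' [Dg E]].
  destruct (inv_C1 _ _ Dh Hi) as [dhi Chi].
  destruct Dh as [Hm [[dh Ch] _]]. destruct Dg as [Gm [[dg Cg] _]].
  assert (Mhi : maps01 hi) by (intros x Hx; apply Hi; auto).
  unfold cj. split.
  - exists (fun y => dh (g' (hi y)) * (dg (hi y) * dhi y)).
    eapply C1_ext; [apply (C1_comp (fun y => g' (hi y)) h); auto; apply C1_comp; auto|].
    intros y Hy. rewrite E; auto.
  - intros x Hx. rewrite E; auto.
Qed.

Section ConjugateConvergence.

Variables H Hi : nat -> R -> R.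
Hypothesis HD : forall n, Diff1p (H n).
Hypothesis HI : forall n, invp (H n) (Hi n).

Definition Conv (g : R -> R) : Prop :=
  forall eps, eps > 0 -> exists N, forall n, (n >= N)%nat -> Near (cj (H n) (Hi n) g) eps.

Lemma conv_id : Conv (fun x => x).
Proof.
  intros eps He. exists 0%nat. intros n _. apply near_id; auto.
  intros y Hy. apply HI; auto.
Qed.

Lemma conv_ext f g : (forall y, I01 y -> f y = g y) -> Conv f -> Conv g.
Proof.
  intros E Cf eps He. destruct (Cf eps He) as [N HN]. exists N. intros n Hn.
  apply (near_ext (cj (H n) (Hi n) f)); [apply HN; exact Hn|].
  intros y Hy. unfold cj. rewrite E; [reflexivity | apply HI; auto].
Qed.

(* Closure under composition, from [near_comp] since
   cj (f o g) = cj f o cj g on [0,1]. *)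
Lemma conv_comp f g : diff_like f -> diff_like g -> Conv f -> Conv g ->
  Conv (fun x => f (g x)).
Proof.
  intros Df Dg Cf Cg eps He. set (e := Rmin (eps/3) 1).
  assert (He0 : 0 < e) by (unfold e; apply Rmin_pos; lra).
  assert (e <= eps/3) by apply Rmin_l. assert (e <= 1) by apply Rmin_r.
  destruct (Cf e He0) as [N1 K1]. destruct (Cg e He0) as [N2 K2].
  exists (Nat.max N1 N2). intros n Hn.
  destruct (conj_C1 _ _ f (HD n) (HI n) Df) as [C1f M1f].
  destruct (conj_C1 _ _ g (HD n) (HI n) Dg) as [C1g M1g].
  apply (near_mono _ (3 * e)); [lra|].
  apply (near_comp (cj (H n) (Hi n) f) (cj (H n) (Hi n) g)); auto;
    [apply K1; lia | apply K2; lia |].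
  intros y Hy. unfold cj. do 2 f_equal. symmetry.
  apply HI, (diff_like_maps01 g Dg), HI, Hy.
Qed.

(* Closure under inversion, from [near_inv] since cj g inverts cj f. *)
Lemma conv_inv f g : diff_like f -> diff_like g ->
  (forall x, I01 x -> g (f x) = x /\ f (g x) = x) -> Conv f -> Conv g.
Proof.
  intros Df Dg Inv Cf eps He. set (e := Rmin (eps/2) (1/2)).
  assert (He0 : 0 < e) by (unfold e; apply Rmin_pos; lra).
  assert (e <= eps/2) by apply Rmin_l. assert (e <= 1/2) by apply Rmin_r.
  destruct (Cf e He0) as [N K]. exists N. intros n Hn.
  destruct (conj_C1 _ _ f (HD n) (HI n) Df) as [C1f M1f].
  destruct (conj_C1 _ _ g (HD n) (HI n) Dg) as [C1g M1g].
  apply (near_mono _ (2 * e)); [lra|].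
  apply (near_inv (cj (H n) (Hi n) f)); auto; try (apply K; exact Hn).
  intros x Hx. unfold cj. assert (Hx' : I01 (Hi n x)) by (apply HI; auto).
  split.
  - destruct (HI n (f (Hi n x)) (diff_like_maps01 f Df _ Hx')) as [_ [-> _]].
    destruct (Inv _ Hx') as [-> _]. apply HI; auto.
  - destruct (HI n (g (Hi n x)) (diff_like_maps01 g Dg _ Hx')) as [_ [-> _]].
    destruct (Inv _ Hx') as [_ ->]. apply HI; auto.
Qed.

Lemma conv_C1_conv_id g : diff_like g -> Conv g -> C1_conv_id (fun n => cj (H n) (Hi n) g).
Proof.
  intros Dg Cg.
  destruct (choice (fun n du => C1_deriv01 (cj (H n) (Hi n) g) du)) as [du Hdu].
  { intros n. apply (conj_C1 _ _ g (HD n) (HI n) Dg). }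
  exists du. split; [exact Hdu|].
  intros eps He. destruct (Cg eps He) as [N HN]. exists N. intros n Hn x Hx.
  exact (HN n Hn (du n) (Hdu n) x Hx).
Qed.

End ConjugateConvergence.

Definition in_group (Gm : (R -> R) -> Prop) (g : R -> R) : Prop :=
  exists g', Gm g' /\ forall y, I01 y -> g y = g' y.

Lemma in_group_diff_like Gm g : is_subgroup Gm -> in_group Gm g -> diff_like g.
Proof. intros [Gd _] [g' [Hg' E]]. exists g'; split; auto. Qed.

Lemma gen_in_group Gm S : is_subgroup Gm -> (forall s, In s S -> Gm s) ->
  forall g, gen S g -> in_group Gm g.
Proof.
  intros HG HS. pose proof HG as [Gd [Gid [Gc Gi]]].
  induction 1 as [f Hf | | f g _ Qf _ Qg | f g _ Qf Mg Inv | f g _ Qf E].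
  - exists f; auto.
  - exists (fun x => x); auto.
  - destruct Qf as [f' [Hf' Ef]]. destruct Qg as [g' [Hg' Eg]].
    exists (fun x => f' (g' x)); split; auto. intros y Hy.
    assert (Mg : I01 (g y)) by (rewrite Eg by exact Hy; apply (Gd g' Hg'), Hy).
    rewrite (Ef _ Mg), Eg; auto.
  - destruct Qf as [f' [Hf' Ef]]. destruct (Gi f' Hf') as [f'' [Hf'' Ei]].
    exists f''; split; auto. intros y Hy.
    destruct (Inv y Hy) as [_ E1]. destruct (Ei (g y) (Mg y Hy)) as [E2 _].
    rewrite <- E1 at 2. rewrite Ef by auto. auto.
  - destruct Qf as [f' [Hf' Ef]]. exists f'; split; auto.
    intros y Hy. rewrite <- E; auto.
Qed.

Lemma gen_conv (H Hi : nat -> R -> R) Gm S :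
  (forall n, Diff1p (H n)) -> (forall n, invp (H n) (Hi n)) ->
  is_subgroup Gm -> (forall s, In s S -> Gm s) ->
  (forall s, In s S -> Conv H Hi s) -> forall g, gen S g -> Conv H Hi g.
Proof.
  intros HD HI HG HS Hb.
  assert (DL : forall g, gen S g -> diff_like g).
  { intros g Hg. apply (in_group_diff_like Gm); auto. apply (gen_in_group Gm S); auto. }
  induction 1 as [f Hf | | f g Hf Cf Hg Cg | f g Hf Cf Mg Inv | f g Hf Cf E].
  - auto.
  - apply conv_id; auto.
  - apply conv_comp; auto.
  - apply (conv_inv H Hi HD HI f); auto. apply DL. eapply gen_inv; eauto.
  - apply (conv_ext H Hi HI f); auto.
Qed.

Lemma conv_near u : C1_conv_id u ->
  forall eps, eps > 0 -> exists N, forall n, (n >= N)%nat -> Near (u n) eps.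
Proof.
  intros [du0 [Cd Hc]] eps He. destruct (Hc eps He) as [N HN]. exists N.
  intros n Hn du C x Hx. destruct (HN n Hn x Hx) as [A1 A2]. split; auto.
  replace (du x) with (du0 n x); auto.
  eapply deriv_uniq; [exact Hx | apply Cd; auto | apply C; auto].
Qed.

Lemma list_near (h hi : nat -> R -> R) (L : list (R -> R)) :
  (forall g, In g L -> C1_conv_id (fun k => cj (h k) (hi k) g)) ->
  forall e, e > 0 -> exists N, forall k, (k >= N)%nat -> forall g, In g L -> Near (cj (h k) (hi k) g) e.
Proof.
  induction L as [|a L IH]; intros HL e He.
  - exists 0%nat. intros k _ g [].
  - destruct (IH (fun g Hg => HL g (or_intror Hg)) e He) as [N1 K1].
    destruct (conv_near _ (HL a (or_introl eq_refl)) e He) as [N2 K2].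
    exists (Nat.max N1 N2). intros k Hk g [<-|Hg].
    + apply K2; lia.
    + apply K1; auto; lia.
Qed.

(* Given, for each n, a conjugating sequence (h n k)_k that works for the finite
   list L n, and an increasing family of lists, the diagonal sequence
   H n := h n (k n), with k n chosen so that the conjugates of all of L n are
   1/(n+1)-close to the identity, works for every element of every L m. *)
Lemma diagonal_conjugation (h hi : nat -> nat -> R -> R) (L : nat -> list (R -> R)) :
  (forall n k, Diff1p (h n k)) -> (forall n k, invp (h n k) (hi n k)) ->
  (forall n g, In g (L n) -> C1_conv_id (fun k => cj (h n k) (hi n k) g)) ->
  (forall m n g, (m <= n)%nat -> In g (L m) -> In g (L n)) ->
  exists H Hi, (forall n, Diff1p (H n)) /\ (forall n, invp (H n) (Hi n)) /\
    forall m g, In g (L m) -> Conv H Hi g.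
Proof.
  intros HD HI Hconv Hmono.
  destruct (choice (fun n k => forall g, In g (L n) ->
      Near (cj (h n k) (hi n k) g) (/ (INR n + 1)))) as [kk Hkk].
  { intros n.
    assert (Hpos : / (INR n + 1) > 0).
    { apply Rinv_0_lt_compat. pose proof (pos_INR n). lra. }
    destruct (list_near (h n) (hi n) (L n) (Hconv n) _ Hpos) as [N HN].
    exists N. apply HN; lia. }
  exists (fun n => h n (kk n)), (fun n => hi n (kk n)).
  split; [auto | split; [auto|]].
  intros m g Hg eps He. destruct (archimed_cor1 eps He) as [N [HN HN0]].
  exists (Nat.max m N). intros n Hn.
  apply (near_mono _ (/ (INR n + 1))).
  - assert (INR N <= INR n) by (apply le_INR; lia).
    assert (0 < INR N) by (apply lt_0_INR; lia).
    assert (/ (INR n + 1) <= / INR N) by (apply Rinv_le_contravar; lra).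
    lra.
  - apply Hkk, (Hmono m); [lia | exact Hg].
Qed.

Fixpoint cumul (SS : nat -> list (R -> R)) (n : nat) : list (R -> R) :=
  match n with
  | 0%nat => SS 0%nat
  | S n' => SS n ++ cumul SS n'
  end.

Lemma cumul_base SS n s : In s (SS n) -> In s (cumul SS n).
Proof. destruct n as [|n]; simpl; auto using in_or_app. Qed.

Lemma cumul_mono SS m n s : (m <= n)%nat -> In s (cumul SS m) -> In s (cumul SS n).
Proof. induction 1; simpl; auto using in_or_app. Qed.

Lemma cumul_in (G : nat -> (R -> R) -> Prop) SS :
  (forall n f, G n f -> G (S n) f) -> (forall n s, In s (SS n) -> G n s) ->
  forall n s, In s (cumul SS n) -> G n s.
Proof.
  intros Hmono HSS. induction n as [|n IH]; simpl; intros s Hs; auto.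
  apply in_app_or in Hs as [Hs|Hs]; auto.
Qed.

Theorem theoremt (G : nat -> (R -> R) -> Prop) :
  (forall n, is_subgroup (G n)) ->
  (forall n f, G n f -> G (S n) f) ->
  (forall n, fin_gen (G n)) ->
  (forall n, C1_close_id (G n)) ->
  C1_close_id (fun f => exists n, G n f).
Proof.
  intros HG Hmono Hfg Hcl.
  destruct (choice (fun n S0 => (forall s, In s S0 -> G n s) /\ (forall g, G n g -> gen S0 g)) Hfg)
    as [SS HSS].
  destruct (choice (fun n (p : (nat -> R -> R) * (nat -> R -> R)) =>
     (forall k, Diff1p (fst p k)) /\ (forall k, invp (fst p k) (snd p k)) /\
     forall g, G n g -> C1_conv_id (fun k => cj (fst p k) (snd p k) g)))
    as [hp Hhp].
  { intros n. destruct (Hcl n) as [h [hi P]]. exists (h, hi). exact P. }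
  destruct (diagonal_conjugation (fun n => fst (hp n)) (fun n => snd (hp n)) (cumul SS))
    as [H [Hi [HD [HI Hconv]]]].
  - intros n. apply Hhp.
  - intros n. apply Hhp.
  - intros n g Hg. apply Hhp, (cumul_in G SS Hmono (fun n => proj1 (HSS n)) n g Hg).
  - apply cumul_mono.
  -
    exists H, Hi. split; [exact HD | split; [exact HI|]].
    intros g [m Hg].
    apply conv_C1_conv_id; auto.
    + apply (in_group_diff_like (G m)); auto. exists g; auto.
    + apply (gen_conv H Hi (G m) (SS m)); auto; [apply HSS | | apply HSS; auto].
      intros s Hs. apply (Hconv m), cumul_base, Hs.
Qed.
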